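(* Let $K$ be a finite field with $q$ elements and let $\Psi(x)\in K[x]$ be a polynomial of degree $\deg\Psi\geqslant 1$. Then there exists an irreducible polynomial in $K[x]$ that is coprime to $\Psi$ and has degree $\leqslant \log_q(\deg\Psi)+1$.
   Context: $\log_q$ denotes the logarithm to base $q$. *)

From mathcomp Require Import all_boot all_algebra all_field.
From Stdlib Require Import Reals.
Set Implicit Arguments. Unset Strict Implicit. Unset Printing Implicit Defensive.

Definition logb (q x : R) : R := (ln x / ln q)%R.

From mathcomp Require Import all_boot all_algebra all_field.
From Stdlib Require Import Reals Lra.
Import GRing.Theory.

(* Let t = trunc_log q d, so that d < q^(t+1).  The extension of K of degree
   t + 1 has q^(t+1) > d elements, so it contains an element a that is not a
   root of Psi.  The minimal polynomial of a over K is irreducible, has degree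
   at most t + 1 <= log_q d + 1, and is coprime to Psi because any common
   factor would vanish at a. *)

Set Implicit Arguments.
Unset Strict Implicit.
Unset Printing Implicit Defensive.

Section FiniteFields.

Local Open Scope ring_scope.

Lemma separable_Xn_sub_X (R : idomainType) (n : nat) :
  n%:R = 0 :> R -> separable_poly ('X^n - 'X : {poly R}).
Proof.
move=> n0; rewrite unlock /separable_poly derivB derivXn derivX -mulr_natr.
rewrite -polyC_natr n0 mulr0 sub0r -(scaleN1r 1) coprimepZr ?coprimep1 //.
by rewrite oppr_eq0 oner_eq0.
Qed.

Lemma finField_natr_card (F : finFieldType) : #|F|%:R = 0 :> F.
Proof.
have [p p_pr pcharFp] := finPcharP F.
have /= cardF := card_pprimeChar pcharFp.
have logF_gt0 : (0 < logn p #|F|)%nat.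
  rewrite lt0n; apply: contraTneq (finNzRing_gt1 F) => logF0.
  by rewrite cardF logF0.
by rewrite cardF natrX (pcharf0 pcharFp) expr0n gtn_eqF.
Qed.

Lemma natr_expn_card (F : finFieldType) (L : lalgType F) (n : nat) :
  (0 < n)%nat -> (expn #|F| n)%:R = 0 :> L.
Proof.
move=> n_gt0; rewrite -(rmorph_nat (in_alg L)) natrX finField_natr_card.
by rewrite expr0n gtn_eqF //= scale0r.
Qed.

Lemma card_finField_ext (F : finFieldType) (L : fieldExtType F) :
  #|finvect_type L| = expn #|F| (\dim {:L}).
Proof. by have := card_vspace {:finvect_type L}%VS; rewrite card_vspacef. Qed.

Lemma finField_fixed_subfield (F : finFieldType) (L : splittingFieldType F)
    (n : nat) :
  {E : {subfield L} | forall x, (x \in E) = (x ^+ expn #|F| n == x)}.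
Proof.
have /finField_galois_generator[/= alpha _ Dalpha] := sub1v {:L}.
rewrite dimv1 expn1 in Dalpha.
exists (fixedSpace (alpha ^+ n)%g) => x; rewrite (sameP fixedSpaceP eqP).
congr (_ == x); elim: n => [|n IHn]; first by rewrite gal_id.
by rewrite expgSr galM ?memvf // IHn Dalpha ?memvf // expnSr exprM.
Qed.

(* Take the splitting field of X^m - X, m = |F|^n: the roots are distinct (the
   derivative is -1) and form the subfield fixed by x |-> x^m, so they exhaust
   the field, which thus has exactly m elements. *)
Lemma finField_ext_exists (F : finFieldType) (n : nat) :
  (0 < n)%nat -> {L : splittingFieldType F | \dim {:L} = n}.
Proof.
move=> n_gt0; set m := expn #|F| n.
pose q (R : nzRingType) : {poly R} := 'X^m - 'X.
have /FinSplittingFieldFor[L splitLq] : q F != 0.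
  exact/separable_poly_neq0/separable_Xn_sub_X/(natr_expn_card F^o n_gt0).
rewrite [map_poly _ _]rmorphB rmorphXn /= map_polyX -/(q L) in splitLq.
exists L; have [zs DqL defL] := splitLq.
have Uzs : uniq zs.
  rewrite -separable_prod_XsubC -(eqp_separable DqL).
  exact/separable_Xn_sub_X/natr_expn_card.
have [E memE] := finField_fixed_subfield L n.
have zsE : zs =i E.
  move=> z; rewrite -root_prod_XsubC -(eqp_root DqL) memE.
  by rewrite /root !hornerE subr_eq0.
have defE : E = {:L}%AS.
  apply/val_inj/eqP; rewrite /= eqEsubv subvf -defL.
  rewrite -[val E]subfield_closed agenvS // subv_add sub1v.
  by apply/span_subvP=> z; rewrite zsE.
have cardL : #|finvect_type L| = m.
  have /eq_card-> : finvect_type L =i zs by move=> z; rewrite zsE defE memvf.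
  rewrite (card_uniqP _) //; apply: succn_inj.
  rewrite -(size_prod_XsubC _ (fun z : L => z)) -(eqp_size DqL).
  rewrite size_polyDl size_polyXn // size_polyN size_polyX ltnS.
  by rewrite (ltn_exp2l 0) ?finNzRing_gt1.
by apply: (expnI (finNzRing_gt1 F)); rewrite -card_finField_ext.
Qed.

Lemma finField_exists_nonroot (R : finFieldType) (p : {poly R}) :
  p != 0 -> (size p <= #|R|)%nat -> exists x, ~~ root p x.
Proof.
move=> p_neq0 le_p_R.
case: (pickP [pred x | ~~ root p x]) => [x px | all_roots]; first by exists x.
suff : (#|R| < size p)%nat by rewrite ltnNge le_p_R.
rewrite cardE; apply: max_poly_roots (enum_uniq R) => //.
by apply/allP=> x _; have /negbFE := all_roots x.
Qed.

Lemma irreducible_root_over_base (F : fieldType) (L : fieldExtType F) (x : L) :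
  exists P : {poly F}, [/\ irreducible_poly P, root (map_poly (in_alg L) P) x
                         & ((size P).-1 <= \dim {:L})%nat].
Proof.
have /polyOver1P[P DP] := minPolyOver 1%AS x.
have szP : size P = size (minPoly 1 x) by rewrite DP size_map_poly.
exists P; split; last 2 first.
- by have := root_minPoly 1%AS x; rewrite DP.
- by rewrite szP size_minPoly /= adjoin_degreeE dimv1 divn1 dimvS ?subvf.
split=> [|Q Q_neq1 dvd_QP]; first by rewrite szP size_minPoly.
have Q_over : map_poly (in_alg L) Q \is a polyOver 1%VS.
  by apply/polyOver1P; exists Q.
have := minPoly_irr (x := x) Q_over; rewrite DP dvdp_map eqp_map.
case/(_ dvd_QP)/orP=> [// | /eqp_size].
by rewrite size_map_poly size_poly1 => /eqP; rewrite (negPf Q_neq1).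
Qed.

Lemma coprimep_irreducible_nonroot (F : fieldType) (L : fieldExtType F)
    (P Q : {poly F}) (x : L) :
  irreducible_poly P -> root (map_poly (in_alg L) P) x ->
  ~~ root (map_poly (in_alg L) Q) x -> coprimep P Q.
Proof.
move=> irrP Px; rewrite irreducible_poly_coprime //; apply: contra.
by rewrite -(dvdp_map (in_alg L)) => /dvdpP[r ->]; rewrite rootM Px orbT.
Qed.

Lemma finField_exists_irreducible_coprimep (K : finFieldType) (Psi : {poly K})
    (n : nat) :
  Psi != 0 -> (0 < n)%nat -> (size Psi <= expn #|K| n)%nat ->
  exists P : {poly K},
    [/\ irreducible_poly P, coprimep P Psi & ((size P).-1 <= n)%nat].
Proof.
move=> Psi_neq0 n_gt0 le_Psi_qn; have [L dimL] := finField_ext_exists K n_gt0.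
have [a Psi_a] : exists a : finvect_type L, ~~ root (map_poly (in_alg L) Psi) a.
  apply: finField_exists_nonroot; first by rewrite map_poly_eq0.
  by rewrite size_map_poly card_finField_ext dimL.
have [P [irrP Pa degP]] := irreducible_root_over_base a.
exists P; split; rewrite -?dimL //.
exact: coprimep_irreducible_nonroot Pa Psi_a.
Qed.

End FiniteFields.

Lemma INR_expn (m n : nat) : INR (expn m n) = (INR m ^ n)%R.
Proof. by elim: n => [|n IHn] //=; rewrite expnS -multE mult_INR IHn. Qed.

Lemma trunc_log_le_logb (q d : nat) :
  (1 < q)%nat -> (0 < d)%nat -> (INR (trunc_log q d) <= logb (INR q) (INR d))%R.
Proof.
move=> q_gt1 d_gt0; set t := trunc_log q d.
have q_gt0 : (0 < INR q)%R by apply: lt_0_INR; apply/ltP; exact: ltnW.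
have lnq_gt0 : (0 < ln (INR q))%R.
  by rewrite -ln_1; apply: ln_increasing; [lra | apply: lt_1_INR; apply/ltP].
apply: (Rmult_le_reg_r (ln (INR q))) => //.
rewrite /logb /Rdiv Rmult_assoc Rinv_l ?Rmult_1_r; last lra.
rewrite -ln_pow // -INR_expn.
have := le_INR _ _ (elimT leP (trunc_logP q_gt1 d_gt0)); rewrite -/t.
case/Rle_lt_or_eq_dec => [lt_qt_d | ->]; last exact: Rle_refl.
apply/Rlt_le/ln_increasing => //; rewrite INR_expn; exact: pow_lt.
Qed.

Theorem lemma2 (K : finFieldType) (Psi : {poly K}) :
  (1 <= (size Psi).-1)%N ->
  exists P : {poly K},
    irreducible_poly P /\ coprimep P Psi /\
    (INR (size P).-1 <= logb (INR #|K|) (INR (size Psi).-1) + 1)%R.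
Proof.
move=> d_gt0; set d := (size Psi).-1 in d_gt0 *; set t := trunc_log #|K| d.
have q_gt1 := finNzRing_gt1 K.
have Psi_gt0 : (0 < size Psi)%nat by move: d_gt0; rewrite /d; case: size.
have le_Psi_qt : (size Psi <= expn #|K| t.+1)%nat.
  by rewrite -(prednK Psi_gt0) trunc_log_ltn.
move: Psi_gt0; rewrite size_poly_gt0 => Psi_neq0.
have [P [irrP coP degP]] :=
  finField_exists_irreducible_coprimep Psi_neq0 (ltn0Sn t) le_Psi_qt.
exists P; split=> //; split=> //.
apply: (Rle_trans _ (INR t + 1)); first by rewrite -S_INR; apply/le_INR/leP.
exact/Rplus_le_compat_r/trunc_log_le_logb.
Qed.
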